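(* Let $k$ be a finite extension of $\mathbb{Q}_p$ and $L$ a finite-dimensional solvable Lie algebra over $k$ which is CA. Then $L$ is either abelian, or metabelian of the form $C\ltimes N$, where $N$ and $C$ are abelian, $\dim C\leq\dim N$, and $C$ acts fixed-point-freely on $N$.
   Context: A Lie algebra is CA if the centralizer of each of its nonzero elements is abelian. $C$ acts fixed-point-freely on $N$ if for $c\in C$, $n\in N$, $[c,n]=0$ implies $c=0$ or $n=0$. *)

From HB Require Import structures.
From mathcomp Require Import all_boot all_order all_algebra.
From mathcomp Require Import reals.
Set Implicit Arguments. Unset Strict Implicit. Unset Printing Implicit Defensive.
Import Order.TTheory GRing.Theory Num.Theory.
Local Open Scope ring_scope.

(* The p-adic absolute value on Q: |q|_p = p^(-v_p(q)), |0|_p = 0. *)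
Definition padic_abs (R : realType) (p : nat) (q : rat) : R :=
  if q == 0 then 0
  else (p%:R ^+ logn p `|denq q|%N) / (p%:R ^+ logn p `|numq q|%N).

Definition is_absval (R : realType) (k : fieldType) (abs : k -> R) : Prop :=
  [/\ forall x, 0 <= abs x,
      forall x, abs x = 0 <-> x = 0,
      forall x y, abs (x * y) = abs x * abs y
    & forall x y, abs (x + y) <= abs x + abs y].

Definition abs_cauchy (R : realType) (k : fieldType) (abs : k -> R)
    (u : nat -> k) : Prop :=
  forall e : R, 0 < e -> exists N : nat, forall m n : nat,
    (N <= m)%N -> (N <= n)%N -> abs (u m - u n) < e.

Definition abs_converges (R : realType) (k : fieldType) (abs : k -> R)
    (u : nat -> k) (x : k) : Prop :=
  forall e : R, 0 < e -> exists N : nat, forall n : nat,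
    (N <= n)%N -> abs (u n - x) < e.

(* x lies in the closure of the prime field Q inside k; when k is complete
   and abs restricts to |.|_p on Q, this closure is (a copy of) Q_p. *)
Definition in_Qp_closure (R : realType) (k : fieldType) (abs : k -> R)
    (x : k) : Prop :=
  exists u : nat -> rat, abs_converges abs (fun n => ratr (u n)) x.

Definition finite_ext_Qp (R : realType) (p : nat) (k : fieldType)
    (abs : k -> R) : Prop :=
  [/\ prime p,
      is_absval abs,
      forall q : rat, abs (ratr q) = padic_abs R p q,
      forall u : nat -> k, abs_cauchy abs u -> exists x, abs_converges abs u x
    & exists (n : nat) (e : 'I_n -> k), forall x : k,
        exists c : 'I_n -> k, (forall i, in_Qp_closure abs (c i)) /\
          x = \sum_(i < n) c i * e i].

Definition lie_bracket (k : fieldType) (V : lmodType k) (br : V -> V -> V)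
  : Prop :=
  [/\ forall (a : k) x y z, br (a *: x + y) z = a *: br x z + br y z,
      forall (a : k) x y z, br z (a *: x + y) = a *: br z x + br z y,
      forall x, br x x = 0
    & forall x y z, br x (br y z) + br y (br z x) + br z (br x y) = 0].



(* [U, W] : the subspace spanned by the brackets [u, w], u in U, w in W. *)
Definition lie_brv (k : fieldType) (V : vectType k) (br : V -> V -> V)
    (U W : {vspace V}) : {vspace V} :=
  (\sum_(i < \dim U) \sum_(j < \dim W)
     <[br (vbasis U)`_i (vbasis W)`_j]>)%VS.

Fixpoint derived_series (k : fieldType) (V : vectType k) (br : V -> V -> V)
    (n : nat) : {vspace V} :=
  match n with
  | 0 => fullv
  | m.+1 => lie_brv br (derived_series br m) (derived_series br m)
  end.

Definition lie_solvable (k : fieldType) (V : vectType k) (br : V -> V -> V)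
  : Prop := exists n, derived_series br n = 0%VS.

Definition lie_abelian (k : fieldType) (V : lmodType k) (br : V -> V -> V)
  : Prop := forall x y, br x y = 0.

(* CA: the centralizer of every nonzero element is abelian. *)
Definition lie_CA (k : fieldType) (V : lmodType k) (br : V -> V -> V)
  : Prop :=
  forall x, x != 0 -> forall y z, br x y = 0 -> br x z = 0 -> br y z = 0.

Definition lie_metabelian (k : fieldType) (V : vectType k) (br : V -> V -> V)
  : Prop :=
  forall x y, x \in lie_brv br fullv fullv -> y \in lie_brv br fullv fullv ->
    br x y = 0.

Definition semidirect_CN (k : fieldType) (V : vectType k) (br : V -> V -> V)
    (C N : {vspace V}) : Prop :=
  [/\ (C + N)%VS = fullv, (C :&: N)%VS = 0%VS,
      (forall x y, y \in N -> br x y \in N)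
    & (forall x y, x \in C -> y \in C -> br x y \in C)] /\
  [/\
      (forall x y, x \in C -> y \in C -> br x y = 0),
      (forall x y, x \in N -> y \in N -> br x y = 0),
      (\dim C <= \dim N)%N
    & (forall c n, c \in C -> n \in N -> br c n = 0 -> c = 0 \/ n = 0)].

(** The field k has characteristic 0, which is all that is used about it.
    If L is not abelian, let a <> 0 lie in the last nonzero term of the
    derived series, an abelian ideal.  By CA, N := C_L(a) is an abelian
    ideal containing the centralizer of each of its nonzero elements.
    Jacobson's lemma (an endomorphism [P, Y] commuting with P has traceless
    powers, hence is singular in characteristic 0), applied to ad restricted
    to N, shows that [a, [y, a]] \in N forces [y, a] \in N; descending the
    derived series gives [L, L] <= N.  For x \notin N, C := C_L(x) is abelian
    and meets N trivially, and rank-nullity for ad x and ad a gives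
    L = C (+) N with dim C <= dim N. *)

From HB Require Import structures.
From mathcomp Require Import all_boot all_order all_algebra.
From mathcomp Require Import reals.
From Stdlib Require Import Classical_Prop.
Set Implicit Arguments. Unset Strict Implicit.
Unset Printing Implicit Defensive.
Import GRing.Theory Num.Theory passmx.
Local Open Scope ring_scope.

Lemma finite_ext_Qp_pchar0 (R : realType) (p : nat) (k : fieldType)
    (abs : k -> R) :
  finite_ext_Qp p abs -> [pchar k] =i pred0.
Proof.
case=> p_pr [_ abs_eq0 _ _] abs_rat _ _; apply/pcharf0P => n.
apply/idP/idP => [/eqP n0|/eqP->//]; apply: contraTT isT => /negbTE nz.
have := abs_rat n%:R; rewrite ratr_nat n0 (proj2 (abs_eq0 0) erefl) /padic_abs.
rewrite pnatr_eq0 nz => /esym/eqP; rewrite mulf_eq0 invr_eq0 !expf_eq0.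
by rewrite pnatr_eq0 eqn0Ngt (prime_gt0 p_pr) !andbF.
Qed.

Lemma mxtrace_commutator_expS (k : comRingType) n (P Y : 'M[k]_n.+1) i :
  GRing.comm P (P * Y - Y * P) -> \tr ((P * Y - Y * P) ^+ i.+1) = 0.
Proof.
set Q := P * Y - Y * P => cPQ.
have cPQi : GRing.comm P (Q ^+ i) by apply: commrX.
rewrite exprSr {2}/Q mulrBr linearB /= mulrA -cPQi -mulrA -!mulmxE.
by rewrite mxtrace_mulC !mulmxE mulrA subrr.
Qed.

Lemma det_eq0_of_mxtrace_expS (k : idomainType) n (Q : 'M[k]_n.+1) :
  n.+1%:R != 0 :> k -> (forall i, \tr (Q ^+ i.+1) = 0) -> \det Q = 0.
Proof.
(* Taking traces in Cayley-Hamilton leaves (n + 1) times the constant term. *)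
move=> n0 trQ; have := congr1 mxtrace (Cayley_Hamilton Q).
rewrite -[char_poly Q]coefK poly_def rmorph_sum raddf_sum /= mxtrace0.
rewrite size_char_poly big_ord_recl big1 => [|i _]; last first.
  by rewrite lift0 linearZ rmorphXn /= horner_mx_X linearZ /= trQ mulr0.
rewrite linearZ /= expr0 rmorph1 linearZ /= mxtrace1 char_poly_det => /eqP.
by rewrite addr0 mulf_eq0 (negPf n0) orbF mulf_eq0 signr_eq0 => /eqP.
Qed.

Lemma det_commutator_eq0 (k : idomainType) n (P Y Q : 'M[k]_n) :
  n%:R != 0 :> k -> Q = P *m Y - Y *m P -> P *m Q = Q *m P -> \det Q = 0.
Proof.
case: n P Y Q => [|n] P Y Q; first by rewrite eqxx.
rewrite !mulmxE => n0 -> cPQ; apply: det_eq0_of_mxtrace_expS n0 _ => i.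
exact: mxtrace_commutator_expS.
Qed.

Lemma lfun_commutator_singular (k : fieldType) (V : vectType k)
    (P Y Q : 'End(V)) :
  (\dim {:V})%:R != 0 :> k -> Q = ((Y \o P) - (P \o Y))%VF ->
  (P \o Q = Q \o P)%VF -> exists2 v, v != 0 & Q v = 0.
Proof.
move=> dimV defQ cPQ; have eV := vbasisP {:V}.
pose M := mxof (vbasis {:V}) (vbasis {:V}).
have /eqP/det0P[w w0 wQ] : \det (M Q) = 0.
  apply: (det_commutator_eq0 (P := M P) (Y := M Y)) => //.
    by rewrite /M defQ linearB /= !(mxof_comp _ _ eV).
  by rewrite /M -!(mxof_comp _ _ eV) cPQ.
exists (vecof (vbasis {:V}) w); first by rewrite vecof_eq0.
by rewrite (hom_vecof _ eV) wQ linear0.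
Qed.

Section LieAlgebra.
Variables (k : fieldType) (L : vectType k) (br : L -> L -> L).
Hypothesis brL : lie_bracket br.

Lemma br_linear x : linear (br x).
Proof. by case: brL => _ brD _ _ a u v; rewrite brD. Qed.

Lemma br_linear_l y : linear (br^~ y).
Proof. by case: brL => brD _ _ _ a u v; rewrite /= brD. Qed.

Definition ad x : {linear L -> L} :=
  HB.pack (br x) (GRing.isLinear.Build k L L *:%R (br x) (br_linear x)).
Definition ad_l y : {linear L -> L} :=
  HB.pack (br^~ y) (GRing.isLinear.Build k L L *:%R (br^~ y) (br_linear_l y)).

Lemma brx0 x : br x 0 = 0. Proof. exact: (linear0 (ad x)). Qed.
Lemma br0x y : br 0 y = 0. Proof. exact: (linear0 (ad_l y)). Qed.
Lemma brxN x u : br x (- u) = - br x u. Proof. exact: (linearN (ad x)). Qed.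
Lemma brxD x u v : br x (u + v) = br x u + br x v.
Proof. exact: (linearD (ad x)). Qed.
Lemma brDx y u v : br (u + v) y = br u y + br v y.
Proof. exact: (linearD (ad_l y)). Qed.
Lemma brxZ x a u : br x (a *: u) = a *: br x u.
Proof. exact: (linearZZ (ad x)). Qed.
Lemma brZx y a u : br (a *: u) y = a *: br u y.
Proof. exact: (linearZZ (ad_l y)). Qed.
Lemma brx_sum x I (r : seq I) (P : pred I) (F : I -> L) :
  br x (\sum_(i <- r | P i) F i) = \sum_(i <- r | P i) br x (F i).
Proof. exact: (linear_sum (ad x)). Qed.
Lemma br_sumx y I (r : seq I) (P : pred I) (F : I -> L) :
  br (\sum_(i <- r | P i) F i) y = \sum_(i <- r | P i) br (F i) y.
Proof. exact: (linear_sum (ad_l y)). Qed.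

Lemma brxx x : br x x = 0. Proof. by case: brL. Qed.

Lemma br_anticomm x y : br x y = - br y x.
Proof.
apply/eqP; rewrite -addr_eq0; have := brxx (x + y).
by rewrite brDx !brxD !brxx add0r addr0 => ->.
Qed.

Lemma jacobi x y z : br x (br y z) = br (br x y) z + br y (br x z).
Proof.
case: brL => _ _ _ /(_ x y z) /eqP.
rewrite (br_anticomm z x) brxN (br_anticomm z (br x y)).
by rewrite subr_eq0 subr_eq => /eqP.
Qed.

Definition lie_ideal (I : {vspace L}) := forall x v, v \in I -> br x v \in I.

Definition lie_cent x : {vspace L} := lker (linfun (br x)).

Lemma mem_cent x y : (y \in lie_cent x) = (br x y == 0).
Proof. by rewrite memv_ker (lfunE (ad x)). Qed.

Lemma mem_brv (U W : {vspace L}) u w :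
  u \in U -> w \in W -> br u w \in lie_brv br U W.
Proof.
move=> /coord_vbasis-> /coord_vbasis->; rewrite br_sumx.
apply: memv_suml => i _; rewrite brZx brx_sum; apply/memvZ/memv_suml => j _.
rewrite brxZ; apply: memvZ; rewrite memvE.
by apply: (sumv_sup i) => //; apply: (sumv_sup j).
Qed.

Lemma brv_sub (U W V : {vspace L}) :
  {in U & W, forall u w, br u w \in V} -> (lie_brv br U W <= V)%VS.
Proof.
have vbasis_nth (X : {vspace L}) (i : 'I_(\dim X)) : (vbasis X)`_i \in X.
  by rewrite vbasis_mem ?mem_nth ?size_tuple.
move=> UWV; apply/subv_sumP => i _; apply/subv_sumP => j _.
by rewrite -memvE UWV ?vbasis_nth.
Qed.

Lemma derived_series_ideal i : lie_ideal (derived_series br i).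
Proof.
elim: i => [|i IH] x v; first by rewrite !memvf.
rewrite -[br x v](lfunE (ad x)) memv_preim; move: v; apply/subvP.
apply: brv_sub => u w Du Dw; rewrite -memv_preim lfunE /= jacobi.
by apply: memvD; apply: mem_brv; rewrite ?IH.
Qed.

Lemma derived_seriesS i : (derived_series br i.+1 <= derived_series br i)%VS.
Proof. by apply: brv_sub => u v _; apply: derived_series_ideal. Qed.

Lemma derived_series_decr m n :
  (m <= n)%N -> (derived_series br n <= derived_series br m)%VS.
Proof.
elim: n => [|n IH]; first by rewrite leqn0 => /eqP->.
rewrite leq_eqVlt => /predU1P[->//|/IH]; exact/subv_trans/derived_seriesS.
Qed.

Lemma solvable_abelian_ideal :
  lie_solvable br -> fullv != 0%VS :> {vspace L} ->
  exists A : {vspace L},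
    [/\ A != 0%VS, lie_ideal A & {in A &, forall u v, br u v = 0}].
Proof.
case=> n; elim: n => [/= ->|n IH Dn L0]; first by rewrite eqxx.
have [Dn0|Dn0] := eqVneq (derived_series br n) 0%VS; first exact: IH.
exists (derived_series br n); split=> // [|u v Du Dv].
  exact: derived_series_ideal.
by apply/eqP; rewrite -memv0 -Dn mem_brv.
Qed.

Lemma dimvf_leq_cent x (U : {vspace L}) :
  (forall y, br x y \in U) -> (\dim {:L} <= \dim (lie_cent x) + \dim U)%N.
Proof.
move=> adxU; have := limg_ker_dim (linfun (br x)) fullv.
rewrite capfv => <-; rewrite leq_add2l; apply: dimvS.
by apply/subvP => _ /memv_imgP[y _ ->]; rewrite (lfunE (ad x)) adxU.
Qed.

Section SelfCentralizingIdeal.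
Variable N : {vspace L}.
Hypothesis N_ideal : lie_ideal N.
Hypothesis N_abelian : {in N &, forall u v, br u v = 0}.
Hypothesis N_selfcent : forall v y, v \in N -> v != 0 -> br y v = 0 -> y \in N.
Hypothesis dimN_neq0 : (\dim N)%:R != 0 :> k.

Definition ad_on x : 'End(subvs_of N) := linfun (vsproj N \o ad x \o vsval).

Lemma ad_onE x v : vsval (ad_on x v) = br x (vsval v).
Proof. by rewrite lfunE /= vsprojK ?N_ideal ?subvsP. Qed.

Lemma ad_on_br x y :
  ad_on (br x y) = ((ad_on x \o ad_on y) - (ad_on y \o ad_on x))%VF.
Proof.
apply/lfunP => v; apply/subvs_inj.
by rewrite add_lfunE opp_lfunE !comp_lfunE /= !ad_onE jacobi addrK.
Qed.

Lemma ad_on_eq0 z : z \in N -> ad_on z = 0.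
Proof.
move=> Nz; apply/lfunP => v; apply/subvs_inj.
by rewrite zero_lfunE ad_onE N_abelian ?subvsP.
Qed.

Lemma mem_br_of_br_br y a : br a (br y a) \in N -> br y a \in N.
Proof.
(* On N, ad b = [ad y, ad a] commutes with ad a, so it is singular. *)
set b := br y a => Nab; apply: contraT => Nb.
have ab_comm : (ad_on a \o ad_on b = ad_on b \o ad_on a)%VF.
  by apply/eqP; rewrite -subr_eq0 -ad_on_br ad_on_eq0.
have dimN : (\dim {:subvs_of N})%:R != 0 :> k by rewrite dimvf.
have [v v0 bv0] := lfun_commutator_singular dimN (ad_on_br y a) ab_comm.
have bv : br b (vsval v) = 0 by rewrite -ad_onE bv0.
have v0' : vsval v != 0 by rewrite -(inj_eq subvs_inj) linear0 in v0.
by rewrite (N_selfcent (subvsP v) v0' bv) in Nb.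
Qed.

Lemma derived_series_sub_step i :
  (derived_series br i.+2 <= N)%VS -> (derived_series br i.+1 <= N)%VS.
Proof.
move=> DN; have adDN y a : a \in derived_series br i.+1 -> br y a \in N.
  move=> Da; apply/mem_br_of_br_br/(subvP DN).
  exact: (mem_brv Da (derived_series_ideal _ Da)).
by apply: brv_sub => u v Du Dv; apply/mem_br_of_br_br/adDN/mem_brv.
Qed.

Lemma derived_algebra_sub : lie_solvable br -> (lie_brv br fullv fullv <= N)%VS.
Proof.
case=> n Dn.
suff DN d i : (n <= i + d)%N -> (derived_series br i.+1 <= N)%VS.
  exact: (DN n 0%N).
elim: d i => [|d IH] i; first rewrite addn0 => /leqW/derived_series_decr.
  by move/subv_trans; apply; rewrite Dn sub0v.
by rewrite -addSnnS => /IH/derived_series_sub_step.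
Qed.

End SelfCentralizingIdeal.

Section CentralizersAbelian.
Hypothesis brCA : lie_CA br.

Lemma cent_abelian x : x != 0 -> {in lie_cent x &, forall u v, br u v = 0}.
Proof.
by move=> x0 u v; rewrite !mem_cent => /eqP xu /eqP xv; apply: brCA xu xv.
Qed.

Lemma mem_cent_br0 x v y :
  x != 0 -> v \in lie_cent x -> v != 0 -> br y v = 0 -> y \in lie_cent x.
Proof.
move=> x0; rewrite !mem_cent => /eqP xv v0 yv; apply/eqP/(brCA v0).
  by rewrite br_anticomm xv oppr0.
by rewrite br_anticomm yv oppr0.
Qed.

Lemma cent_ideal (A : {vspace L}) a :
  lie_ideal A -> {in A &, forall u v, br u v = 0} -> a \in A -> a != 0 ->
  lie_ideal (lie_cent a).
Proof.
move=> A_ideal A_abelian Aa a0 y v; rewrite !mem_cent => /eqP av.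
have Aay : br a y \in A by rewrite br_anticomm memvN A_ideal.
have Cay : br a y \in lie_cent a by rewrite mem_cent A_abelian.
have Cv : v \in lie_cent a by rewrite mem_cent av.
by rewrite jacobi av brx0 addr0 (cent_abelian a0 Cay Cv).
Qed.

Lemma CA_semidirect a x :
  a != 0 -> (lie_brv br fullv fullv <= lie_cent a)%VS -> x \notin lie_cent a ->
  semidirect_CN br (lie_cent x) (lie_cent a).
Proof.
set C := lie_cent x; set N := lie_cent a => a0 LLN xN.
have brN y z : br y z \in N by apply/(subvP LLN)/mem_brv; rewrite memvf.
have x0 : x != 0 by apply: contraNneq xN => ->; rewrite mem0v.
have CN0 : (C :&: N = 0)%VS.
  apply/eqP; rewrite -subv0; apply/subvP => c; rewrite memv_cap memv0.
  case/andP; rewrite mem_cent => /eqP xc Nc; apply: contraNT xN => c0.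
  exact: mem_cent_br0 Nc c0 xc.
have dimCN := dimv_disjoint_sum CN0.
have CNf : (C + N)%VS = fullv.
  by apply/eqP; rewrite eqEdim subvf dimCN dimvf_leq_cent.
split; split=> //.
- by move=> u v Cu Cv; rewrite (cent_abelian x0) ?mem0v.
- exact: cent_abelian.
- exact: cent_abelian.
- by rewrite -(leq_add2r (\dim N)) -dimCN CNf; apply: dimvf_leq_cent.
move=> c n Cc Nn cn; have [->|c0] := eqVneq c 0; [by left | right].
apply/eqP; apply: contraT => n0.
have : c \in (C :&: N)%VS by rewrite memv_cap Cc (mem_cent_br0 a0 Nn n0 cn).
by rewrite CN0 memv0 (negPf c0).
Qed.

End CentralizersAbelian.
End LieAlgebra.

Theorem proposition2p3 (R : realType) (p : nat) (k : fieldType) (abs : k -> R)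
    (hk : finite_ext_Qp p abs)
    (L : vectType k) (br : L -> L -> L)
    (hL : lie_bracket br) (hsolv : lie_solvable br) (hCA : lie_CA br) :
  lie_abelian br \/
  (lie_metabelian br /\
   exists C N : {vspace L}, semidirect_CN br C N).
Proof.
have [Lab|Lnab] := classic (lie_abelian br); [by left | right].
have L0 : fullv != 0%VS :> {vspace L}.
  apply/eqP => L0; apply: Lnab => x y.
  by have := memvf x; rewrite L0 memv0 => /eqP->; apply: br0x.
have [A [A0 A_ideal A_abelian]] := solvable_abelian_ideal hL hsolv L0.
set a := vpick A; have a0 : a != 0 by rewrite vpick0.
have N_abelian := cent_abelian hL hCA a0.
have LLN : (lie_brv br fullv fullv <= lie_cent br a)%VS.
  have N_ideal := cent_ideal hL hCA A_ideal A_abelian (memv_pick A) a0.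
  apply: (derived_algebra_sub hL N_ideal) => // [v y|].
    exact: (mem_cent_br0 hL hCA a0).
  rewrite ((pcharf0P k).1 (finite_ext_Qp_pchar0 hk)) dimv_eq0.
  by apply: contraNneq a0 => N0; rewrite -memv0 -N0 (mem_cent hL) (brxx hL).
have [x xN] : exists x, x \notin lie_cent br a.
  apply: NNPP => N_full; apply: Lnab => u v.
  have Nw w : w \in lie_cent br a by apply: contra_notT N_full => wN; exists w.
  exact: N_abelian (Nw u) (Nw v).
split; last by exists (lie_cent br x), (lie_cent br a); exact: CA_semidirect.
by move=> u v /(subvP LLN) Nu /(subvP LLN) Nv; apply: N_abelian.
Qed.
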